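(* Let $p$ be an odd prime, $r,m$ positive integers and $s\in\{1,2,\dots,mp^{r-1}\}$. Then $$\binom{mp^{r-1}}{s}\binom{2sp}{sp}\binom{2(mp^{r-1}-s)p}{(mp^{r-1}-s)p}\equiv\begin{cases}\binom{m}{s}\binom{2s}{s}\binom{2(m-s)}{m-s}(1+9m)\pmod{p^{r+2}} & \text{if } r=1 \text{ and } p=3,\\ \binom{mp^{r-1}}{s}\binom{2s}{s}\binom{2(mp^{r-1}-s)}{mp^{r-1}-s}\pmod{p^{r+2}} & \text{if } r>1 \text{ or } p>3.\end{cases}$$ *)

From mathcomp Require Import all_boot.

From mathcomp Require Import all_boot all_algebra zify ring.

Set Implicit Arguments.
Unset Strict Implicit.
Unset Printing Implicit Defensive.

Import GRing.Theory Num.Theory.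

(* Removing the multiples of [p] from a factorial gives
   [(n p)! = p ^ n n! \prod_(j < n) B_j], where the block [B_j] is the product
   of the [p - 1] integers strictly between [j p] and [(j + 1) p].  Hence
   [C(2up, up) / C(2u, u) = \prod_(j < u) B_(j + u) / \prod_(j < u) B_j], a
   ratio of units modulo [p].  Pairing [k] with [p - k] writes [B_j ^ 2] as a
   polynomial in [j p (j p + p) = 0 (mod p ^ 2)] whose linear coefficient is
   divisible by [p] for [p >= 5], because [\sum_k 1 / k ^ 2 = 0 (mod p)]; so
   [B_(j + u) ^ 2 = B_j ^ 2 (mod p ^ 3 u)] and [C(2up, up) = C(2u, u)] modulo
   [p ^ 3 u] up to a unit.  For [p = 3], [B_j = (3j + 1)(3j + 2)] and a direct
   induction gives the correction factor [1 + 36 u ^ 3] modulo [27 u].  With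
   [N = m p ^ (r - 1)] and [t = N - s], [p ^ (r - 1)] divides both [C(N, s) s]
   and [C(N, s) t], so the factor [C(N, s)] lifts these congruences to
   [p ^ (r + 2)]; for [p = 3] it remains to expand
   [(1 + 36 s ^ 3)(1 + 36 t ^ 3)] using [n ^ 3 = n (mod 3)]. *)

Definition block p j := \prod_(0 <= k < p.-1) (j * p + k.+1).

Lemma block_gt0 p j : 0 < block p j.
Proof. by apply: prodn_gt0 => k; rewrite addnS. Qed.

Lemma fact_addn x n : (x + n)`! = x`! * \prod_(0 <= k < n) (x + k.+1).
Proof.
elim: n => [|n IHn]; first by rewrite big_geq // addn0 muln1.
by rewrite big_nat_recr //= addnS factS IHn; ring.
Qed.

Lemma fact_muln_block p n : 0 < p ->
  (n * p)`! = p ^ n * n`! * \prod_(0 <= j < n) block p j.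
Proof.
move=> p_gt0; elim: n => [|n IHn]; first by rewrite big_geq // fact0.
rewrite mulSn addnC fact_addn IHn big_nat_recr //= factS expnS.
rewrite -(prednK p_gt0) big_nat_recr //= prednK // /block.
have -> : n * p + p = n.+1 * p by rewrite mulSn addnC.
ring.
Qed.

Lemma bin_muln_block p a b : 0 < p ->
  'C((a + b) * p, a * p) * (\prod_(0 <= j < a) block p j * \prod_(0 <= j < b) block p j)
  = 'C(a + b, a) * \prod_(0 <= j < a + b) block p j.
Proof.
move=> p_gt0.
have binp := bin_fact (leq_addr (b * p) (a * p)).
rewrite addKn -mulnDl !fact_muln_block // in binp.
have bin1 := bin_fact (leq_addr b a); rewrite addKn in bin1.
apply/eqP; rewrite -(@eqn_pmul2l (p ^ (a + b) * a`! * b`!)); last first.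
  by rewrite !muln_gt0 expn_gt0 p_gt0 !fact_gt0.
apply/eqP; rewrite -bin1 expnD in binp; rewrite expnD.
transitivity ('C((a + b) * p, a * p) * (p ^ a * a`! * \prod_(0 <= j < a) block p j
    * (p ^ b * b`! * \prod_(0 <= j < b) block p j))); first ring.
by rewrite binp; ring.
Qed.

Lemma bin_central_block p u : 0 < p ->
  'C(2 * u * p, u * p) * \prod_(0 <= j < u) block p j
  = 'C(2 * u, u) * \prod_(0 <= j < u) block p (j + u).
Proof.
move=> p_gt0; have := bin_muln_block u u p_gt0.
rewrite (big_cat_nat _ (leq_addr u u)) //=.
have -> : \prod_(u <= j < u + u) block p j = \prod_(0 <= j < u) block p (j + u).
  by rewrite -{1}[u]add0n big_addn addnK.
have B_gt0 : 0 < \prod_(0 <= j < u) block p j.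
  by apply: prodn_gt0 => j; exact: block_gt0.
rewrite mul2n -addnn => eq_bin; apply/eqP; rewrite -(eqn_pmul2r B_gt0).
by rewrite -mulnA eq_bin; apply/eqP; ring.
Qed.

Lemma modn_prod_congr (F G : nat -> nat) d n :
  (forall k, F k = G k %[mod d]) ->
  \prod_(0 <= k < n) F k = \prod_(0 <= k < n) G k %[mod d].
Proof.
move=> FG; apply: (big_ind2 (fun x y => x = y %[mod d])) => // x1 x2 y1 y2 ex ey.
by rewrite -modnMm ex ey modnMm.
Qed.

Lemma block_mod p j : block p j = block p 0 %[mod p].
Proof. by apply: modn_prod_congr => k; rewrite mul0n add0n modnMDl. Qed.

Lemma coprime_block p j : prime p -> coprime p (block p j).
Proof.
move=> p_pr; rewrite -coprime_modr block_mod coprime_modr /block big_nat_cond.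
apply: (big_ind (coprime p)) => [|x y|k /andP[/andP[_ lt_kp] _]].
- exact: coprimen1.
- by rewrite coprimeMr => -> ->.
rewrite mul0n add0n prime_coprime //; apply/negP => /dvdn_leq.
by move: (prime_gt1 p_pr); lia.
Qed.

Lemma coprime_prod_block p n : prime p -> coprime p (\prod_(0 <= j < n) block p j).
Proof.
move=> p_pr; apply: (big_ind (coprime p)) => [|x y|j _]; last exact: coprime_block.
- exact: coprimen1.
- by rewrite coprimeMr => -> ->.
Qed.

Lemma prod_block_shift_mod p u n :
  \prod_(0 <= j < n) block p (j + u) = \prod_(0 <= j < n) block p j %[mod p].
Proof. by apply: modn_prod_congr => j; rewrite block_mod (block_mod p j). Qed.

(* [(j p + k) (j p + p - k) = j p (j p + p) + k (p - k)] *)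
Lemma block_sqr p j : 0 < p ->
  block p j ^ 2 = \prod_(0 <= k < p.-1) (j * p * (j * p + p) + k.+1 * (p - k.+1)).
Proof.
move=> p_gt0; rewrite expnS expn1 {2}/block big_nat_rev /block -big_split /=.
rewrite big_nat_cond [RHS]big_nat_cond; apply: eq_bigr => k /andP[/andP[_ lt_kp] _].
have [c def_p] : exists c, p = k.+1 + c by exists (p - k.+1); lia.
have c_gt0 : 0 < c by lia.
have -> : p.-1 - k.+1 = c.-1 by lia.
by rewrite def_p prednK // addKn; ring.
Qed.

Lemma block3 j : block 3 j = (3 * j + 1) * (3 * j + 2).
Proof. by rewrite /block /= !big_nat_recr //= big_geq //; ring. Qed.

Lemma dvdn_mul_bin d n k : d %| n -> d %| 'C(n, k) * k.
Proof.
case: k => [|k] dvd_dn; first by rewrite muln0 dvdn0.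
by rewrite mulnC -mul_bin_diag dvdn_mulr.
Qed.

Lemma odd_prime_ge5 p : prime p -> odd p -> p != 3 -> 5 <= p.
Proof. by case: p => [|[|[|[|[|p]]]]]. Qed.

(* [lincoef_prod b n] is the coefficient of [x] in [\prod_(k < n) (x + b k)]. *)
Fixpoint lincoef_prod (b : nat -> nat) n : nat :=
  if n is n'.+1 then lincoef_prod b n' * b n' + \prod_(0 <= k < n') b k else 0.

Lemma sum_sqr_nat n : 6 * \sum_(0 <= k < n.+1) k ^ 2 = n * n.+1 * (2 * n).+1.
Proof.
elim: n => [|n IHn]; first by rewrite big_nat1.
by rewrite big_nat_recr //= mulnDr IHn; ring.
Qed.

Section IntCongruences.
Local Open Scope ring_scope.

Lemma Posz_prod (F : nat -> nat) n :
  (\prod_(0 <= k < n) F k)%N%:Z = \prod_(0 <= k < n) (F k)%:Z.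
Proof. exact: (big_morph Posz PoszM). Qed.

Lemma PoszX n k : (n ^ k)%N%:Z = n%:Z ^+ k.
Proof. by rewrite -!natz natrX. Qed.

Lemma eq_modn_dvdz (d a b : nat) : (d%:Z %| a%:Z - b%:Z)%Z -> (a = b %[mod d])%N.
Proof. by rewrite -eqz_mod_dvd !modz_nat => /eqP[]. Qed.

Lemma dvdz_prod_sub (d : int) (a c : nat -> int) n :
  (forall k, (d %| a k - c k)%Z) ->
  (d %| \prod_(0 <= k < n) a k - \prod_(0 <= k < n) c k)%Z.
Proof.
move=> dvd_ac; apply: (big_ind2 (fun x y => d %| x - y)%Z) => [|x1 x2 y1 y2 dx dy|k _].
- by rewrite subrr dvdz0.
- rewrite (_ : x1 * y1 - x2 * y2 = (x1 - x2) * y1 + x2 * (y1 - y2)); last by ring.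
  by apply: rpredD; [apply: dvdz_mulr | apply: dvdz_mull].
- exact: dvd_ac.
Qed.

Lemma dvdz_prod_lincoef (b : nat -> nat) (q x y : int) n :
  (q %| x)%Z -> (q %| y)%Z ->
  ((x - y) * q %| \prod_(0 <= k < n) (x + (b k)%:Z) - \prod_(0 <= k < n) (y + (b k)%:Z)
                  - (x - y) * (lincoef_prod b n)%:Z)%Z.
Proof.
move=> q_x q_y.
have q_prod m : (q %| \prod_(0 <= k < m) (y + (b k)%:Z) - (\prod_(0 <= k < m) b k)%N%:Z)%Z.
  by rewrite Posz_prod; apply: dvdz_prod_sub => k; rewrite addrK.
elim: n => [|n IHn]; first by rewrite !big_geq //= subrr mulr0 subr0 dvdz0.
rewrite !big_nat_recr //= PoszD PoszM.
set U := \prod_(0 <= k < n) (x + _); set V := \prod_(0 <= k < n) (y + _).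
set W := (\prod_(0 <= k < n) b k)%N.
rewrite (_ : U * (x + (b n)%:Z) - V * (y + (b n)%:Z)
             - (x - y) * ((lincoef_prod b n)%:Z * (b n)%:Z + W%:Z)
           = (U - V - (x - y) * (lincoef_prod b n)%:Z) * (x + (b n)%:Z)
             + (x - y) * (V - W%:Z) + (x - y) * (lincoef_prod b n)%:Z * x); last by ring.
apply: rpredD; first apply: rpredD.
- exact: dvdz_mulr.
- by apply: dvdz_mul; [exact: dvdzz | exact: q_prod].
- by rewrite -mulrA; apply: dvdz_mul; [exact: dvdzz | exact: dvdz_mull].
Qed.

Lemma lincoef_prodE (F : fieldType) (b : nat -> nat) n :
  (forall k, (k < n)%N -> (b k)%:R != 0 :> F) ->
  (lincoef_prod b n)%:R = (\prod_(0 <= k < n) b k)%:R * \sum_(0 <= k < n) ((b k)%:R)^-1 :> F.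
Proof.
elim: n => [|n IHn] b_neq0; first by rewrite !big_geq // mulr0.
rewrite /= natrD natrM IHn => [|k lt_kn]; last by apply: b_neq0; lia.
have bn_neq0 := b_neq0 n (ltnSn n).
by rewrite !big_nat_recr //= natrM; field.
Qed.

Lemma sum_Fp_nat p (G : 'F_p -> 'F_p) : prime p ->
  \sum_(x : 'F_p) G x = \sum_(0 <= i < p) G i%:R.
Proof.
move=> p_pr; rewrite (eq_bigr (fun x : 'F_p => G (nat_of_ord x)%:R)) => [|x _]; last first.
  by rewrite natr_Zp.
rewrite -(big_mkord xpredT (fun i => G i%:R)).
exact: (congr1 (fun N => \sum_(0 <= i < N) G i%:R) (Fp_cast p_pr)).
Qed.

Lemma sum_Fp_sqr p : prime p -> (5 <= p)%N -> \sum_(x : 'F_p) x ^+ 2 = 0.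
Proof.
move=> p_pr p_ge5; have p_char := pchar_Fp p_pr.
have six_neq0 : (6%:R : 'F_p) != 0.
  rewrite -(dvdn_pcharf p_char); apply/negP => dvd_p6.
  have [] : p = 5%N \/ p = 6%N by have := dvdn_leq (isT : (0 < 6)%N) dvd_p6; lia.
    by move=> def_p; move: dvd_p6; rewrite def_p.
  by move=> def_p; move: p_pr; rewrite def_p.
have : 6%:R * \sum_(x : 'F_p) x ^+ 2 = 0.
  rewrite (sum_Fp_nat (fun x => x ^+ 2)) //.
  rewrite (eq_bigr (fun i => (i ^ 2)%N%:R)) => [|i _]; last by rewrite natrX.
  rewrite -natr_sum -natrM -(prednK (prime_gt0 p_pr)) sum_sqr_nat prednK ?prime_gt0 //.
  by rewrite !natrM (pchar_Fp_0 p_pr) mulr0 mul0r.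
by move/eqP; rewrite mulf_eq0 (negPf six_neq0) => /eqP.
Qed.

(* Modulo [p], the ratio of [lincoef_prod] to the product is
   [\sum_k 1 / (k (p - k)) = - \sum_k 1 / k ^ 2 = - \sum_x x ^ 2]; the term
   [x = 0] may be added since [0^-1 = 0]. *)
Lemma dvdn_lincoef_block p : prime p -> (5 <= p)%N ->
  (p %| lincoef_prod (fun k => k.+1 * (p - k.+1)) p.-1)%N.
Proof.
move=> p_pr p_ge5; have p_char := pchar_Fp p_pr.
have nat_neq0 k : (0 < k < p)%N -> (k%:R : 'F_p) != 0.
  by case/andP=> k_gt0 lt_kp; rewrite -(dvdn_pcharf p_char); apply/negP => /dvdn_leq; lia.
rewrite (dvdn_pcharf p_char) lincoef_prodE => [|k lt_k]; last first.
  by rewrite natrM mulf_neq0 // nat_neq0 //; lia.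
have -> : \sum_(0 <= k < p.-1) (((k.+1 * (p - k.+1))%N)%:R : 'F_p)^-1
          = - \sum_(1 <= i < p) ((i%:R : 'F_p) ^+ 2)^-1.
  rewrite big_add1 -sumrN big_nat_cond [RHS]big_nat_cond.
  apply: eq_bigr => k /andP[/andP[_ lt_k] _].
  by rewrite natrM natrB ?(pchar_Fp_0 p_pr) ?sub0r ?mulrN ?invrN ?expr2 //; lia.
have -> : \sum_(1 <= i < p) ((i%:R : 'F_p) ^+ 2)^-1 = \sum_(0 <= i < p) ((i%:R : 'F_p) ^+ 2)^-1.
  by rewrite [RHS]big_ltn ?prime_gt0 //= expr2 mulr0 invr0 add0r.
rewrite -(sum_Fp_nat (fun x => (x ^+ 2)^-1)) //.
rewrite (reindex_inj (@invr_inj _)) /=.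
have -> : \sum_(x : 'F_p) (x^-1 ^+ 2)^-1 = \sum_(x : 'F_p) x ^+ 2.
  by apply: eq_bigr => x _; rewrite exprVn invrK.
by rewrite sum_Fp_sqr // oppr0 mulr0.
Qed.

Lemma dvdz_block_sqr_shift p s i : prime p -> (5 <= p)%N ->
  ((p ^ 3 * s)%N%:Z %| (block p (i + s) ^ 2)%N%:Z - (block p i ^ 2)%N%:Z)%Z.
Proof.
move=> p_pr p_ge5; rewrite !block_sqr ?prime_gt0 // !Posz_prod.
under eq_bigr do rewrite PoszD.
under [X in _ - X]eq_bigr do rewrite PoszD.
set b := fun k => (k.+1 * (p - k.+1))%N.
set x := ((i + s) * p * ((i + s) * p + p))%N%:Z.
set y := (i * p * (i * p + p))%N%:Z.
have dvd_x : ((p ^ 2)%N%:Z %| x)%Z.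
  by apply/dvdzP; exists ((i + s) * (i + s + 1))%N%:Z; rewrite -PoszM; congr Posz; ring.
have dvd_y : ((p ^ 2)%N%:Z %| y)%Z.
  by apply/dvdzP; exists (i * (i + 1))%N%:Z; rewrite -PoszM; congr Posz; ring.
have [z Hz] := dvdzP (dvdz_prod_lincoef b p.-1 dvd_x dvd_y).
have [w Hw] := dvdnP (dvdn_lincoef_block p_pr p_ge5).
rewrite -/b; set U := \prod_(0 <= k < p.-1) _; set V := \prod_(0 <= k < p.-1) _.
rewrite (_ : U - V = z * ((x - y) * (p ^ 2)%N%:Z) + (x - y) * (lincoef_prod b p.-1)%:Z).
  rewrite Hw /x /y; apply/dvdzP.
  exists (z * p%:Z * (2 * i + s + 1)%N%:Z + (2 * i + s + 1)%N%:Z * w%:Z).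
  by rewrite !expnS !expn0 !muln1 !(PoszM, PoszD); ring.
by rewrite -Hz; ring.
Qed.

Lemma dvdz_block3_shift s n :
  ((27 * s)%N%:Z %| (\prod_(0 <= j < n) block 3 (j + s))%N%:Z
     - (\prod_(0 <= j < n) block 3 j)%N%:Z * (1 + 18 * s * n * (n + s))%N%:Z)%Z.
Proof.
elim: n => [|n IHn]; first by rewrite !big_geq // muln0 mul0n addn0 mulr1 subrr dvdz0.
have [z Hz] := dvdzP IHn.
rewrite !big_nat_recr //= !PoszM !block3.
set A := (\prod_(0 <= j < n) block 3 (j + s))%N%:Z in Hz *.
set B := (\prod_(0 <= j < n) block 3 j)%N%:Z in Hz *.
rewrite (_ : A = z * (27 * s)%N%:Z + B * (1 + 18 * s * n * (n + s))%N%:Z); last first.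
  by rewrite -Hz; ring.
apply/dvdzP; exists (z * ((3 * (n + s) + 1) * (3 * (n + s) + 2))%N%:Z
  + B * (2 * n + s + 1)%:Z * (-1 - 6 * n%:Z ^+ 2 - 6 * n%:Z + 6 * s%:Z * (n * (n + s))%N%:Z)).
by rewrite !(PoszM, PoszD); ring.
Qed.

Lemma dvdz_ratio_congr p e C u X X' A B M (K : int) :
  coprime p (M * B)%N -> (X * B = X' * A)%N -> (p ^ e %| C * u)%N ->
  ((p ^ 3 * u)%N%:Z %| M%:Z * (A%:Z - B%:Z * K))%Z ->
  ((p ^ (e + 3))%N%:Z %| C%:Z * (X%:Z - X'%:Z * K))%Z.
Proof.
move=> cop_MB eq_ratio /dvdnP[w Hw] /dvdzP[v Hv].
rewrite -(Gauss_dvdzr _ (_ : coprimez _ (M * B)%N%:Z)); last first.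
  by rewrite coprimezE /= coprimeXl.
rewrite (_ : (M * B)%N%:Z * (C%:Z * (X%:Z - X'%:Z * K))
           = C%:Z * X'%:Z * (M%:Z * (A%:Z - B%:Z * K))); last first.
  have eq_ratioZ : X%:Z * B%:Z = X'%:Z * A%:Z.
    by rewrite -!PoszM eq_ratio.
  rewrite PoszM; transitivity (C%:Z * M%:Z * (X%:Z * B%:Z - X'%:Z * B%:Z * K)); first ring.
  by rewrite eq_ratioZ; ring.
rewrite Hv; apply/dvdzP; exists (X'%:Z * v * w%:Z).
rewrite expnD !PoszM; transitivity (X'%:Z * v * (p ^ 3)%N%:Z * (C * u)%N%:Z).
  by rewrite !PoszM; ring.
by rewrite Hw PoszM; ring.
Qed.

Lemma dvdz_bin_central p e u C : prime p -> (5 <= p)%N -> (p ^ e %| C * u)%N ->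
  ((p ^ (e + 3))%N%:Z %| C%:Z * ('C(2 * u * p, u * p)%:Z - 'C(2 * u, u)%:Z))%Z.
Proof.
move=> p_pr p_ge5 dvd_Cu.
set A := (\prod_(0 <= j < u) block p (j + u))%N; set B := (\prod_(0 <= j < u) block p j)%N.
have cop_B : coprime p B by exact: coprime_prod_block.
have cop_AB : coprime p (A + B).
  rewrite -coprime_modr -modnDml prod_block_shift_mod modnDml addnn -mul2n coprime_modr.
  by rewrite coprimeMr cop_B andbT prime_coprime //; apply/negP => /dvdn_leq; lia.
rewrite -[X in (_ - X)%R]mulr1; apply: (@dvdz_ratio_congr p e C u _ _ A B (A + B)) => //.
- by rewrite coprimeMr cop_AB.
- exact: bin_central_block (prime_gt0 p_pr).
rewrite mulr1 (_ : (A + B)%N%:Z * (A%:Z - B%:Z) = A%:Z ^+ 2 - B%:Z ^+ 2); last first.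
  by rewrite PoszD; ring.
rewrite /A /B !Posz_prod -!prodrXl; apply: dvdz_prod_sub => j.
by rewrite -!PoszX; exact: dvdz_block_sqr_shift.
Qed.

Lemma dvdz_bin_central3 e u C : (3 ^ e %| C * u)%N ->
  ((3 ^ (e + 3))%N%:Z
     %| C%:Z * ('C(2 * u * 3, u * 3)%:Z - 'C(2 * u, u)%:Z * (1 + 36 * u%:Z ^+ 3)))%Z.
Proof.
move=> dvd_Cu; apply: (@dvdz_ratio_congr 3 e C u _ _
  (\prod_(0 <= j < u) block 3 (j + u)) (\prod_(0 <= j < u) block 3 j) 1) => //.
- by rewrite mul1n; exact: coprime_prod_block.
- exact: bin_central_block.
rewrite mul1r (_ : 1 + 36 * u%:Z ^+ 3 = (1 + 18 * u * u * (u + u))%N%:Z).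
  exact: dvdz_block3_shift.
by rewrite !(PoszD, PoszM); ring.
Qed.

Lemma dvdz_mul_pair (d C X X' Y Y' Ks Kt R : int) :
  (d %| C * (X - X' * Ks))%Z -> (d %| C * (Y - Y' * Kt))%Z -> (d %| C * (Ks * Kt - R))%Z ->
  (d %| C * X * Y - C * X' * Y' * R)%Z.
Proof.
move=> dX dY dK.
rewrite (_ : C * X * Y - C * X' * Y' * R = C * (X - X' * Ks) * Y
  + X' * Ks * (C * (Y - Y' * Kt)) + X' * Y' * (C * (Ks * Kt - R))); last by ring.
by apply: rpredD; first apply: rpredD; [exact: dvdz_mulr | exact: dvdz_mull | exact: dvdz_mull].
Qed.

Lemma dvdz_cube_sub n : (3 %| n%:Z ^+ 3 - n%:Z)%Z.
Proof.
rewrite -eqz_mod_dvd -PoszX (_ : 3 = 3%:Z) // !modz_nat.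
by rewrite (fermat_little n (isT : prime 3)).
Qed.

Lemma dvdz_cube_factors27 s t :
  ((3 ^ 3)%N%:Z
     %| (1 + 36 * s%:Z ^+ 3) * (1 + 36 * t%:Z ^+ 3) - (1 + 9 * (s + t))%N%:Z)%Z.
Proof.
have [a Ha] := dvdzP (dvdz_cube_sub s); have [b Hb] := dvdzP (dvdz_cube_sub t).
rewrite (_ : (1 + 36 * s%:Z ^+ 3) * (1 + 36 * t%:Z ^+ 3) - (1 + 9 * (s + t))%N%:Z
  = 27 * (s%:Z ^+ 3 + t%:Z ^+ 3 + 48 * s%:Z ^+ 3 * t%:Z ^+ 3)
    + 9 * (s%:Z ^+ 3 - s%:Z) + 9 * (t%:Z ^+ 3 - t%:Z)); last first.
  by rewrite !(PoszD, PoszM); ring.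
rewrite Ha Hb; apply/dvdzP.
by exists (s%:Z ^+ 3 + t%:Z ^+ 3 + 48 * s%:Z ^+ 3 * t%:Z ^+ 3 + a + b); ring.
Qed.

(* Uses [s ^ 3 + t ^ 3 = (s + t) ((s + t) ^ 2 - 3 s t)]. *)
Lemma dvdz_cube_factors_pow3 e C s t : (0 < e)%N -> (3 ^ e %| s + t)%N -> (3 ^ e %| C * s)%N ->
  ((3 ^ (e + 3))%N%:Z %| C%:Z * ((1 + 36 * s%:Z ^+ 3) * (1 + 36 * t%:Z ^+ 3) - 1))%Z.
Proof.
case: e => [//|e] _ /dvdnP[k Hk] /dvdnP[w Hw].
rewrite (_ : C%:Z * ((1 + 36 * s%:Z ^+ 3) * (1 + 36 * t%:Z ^+ 3) - 1)
  = 36 * C%:Z * (s + t)%N%:Z * ((s + t)%N%:Z ^+ 2 - 3 * s%:Z * t%:Z)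
    + 1296 * s%:Z ^+ 2 * t%:Z ^+ 3 * (C * s)%N%:Z); last by rewrite PoszD PoszM; ring.
rewrite Hk Hw !PoszM !PoszX -[Posz 3]/(3 : int) addSn; apply/dvdzP.
exists (4 * C%:Z * k%:Z * (3 * k%:Z ^+ 2 * (3 ^+ e) ^+ 2 - s%:Z * t%:Z)
        + 48 * s%:Z ^+ 2 * t%:Z ^+ 3 * w%:Z).
by rewrite !exprS exprD; ring.
Qed.

End IntCongruences.

Theorem lemma2p11 (p r m s : nat) :
  prime p -> odd p -> 0 < r -> 0 < m ->
  1 <= s <= m * p ^ r.-1 ->
  'C(m * p ^ r.-1, s) * 'C(2 * s * p, s * p)
    * 'C(2 * (m * p ^ r.-1 - s) * p, (m * p ^ r.-1 - s) * p)
  = (if (r == 1) && (p == 3)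
     then 'C(m, s) * 'C(2 * s, s) * 'C(2 * (m - s), m - s) * (1 + 9 * m)
     else 'C(m * p ^ r.-1, s) * 'C(2 * s, s)
            * 'C(2 * (m * p ^ r.-1 - s), m * p ^ r.-1 - s))
    %[mod p ^ (r + 2)].
Proof.
move=> p_pr p_odd r_gt0 _ /andP[_ le_sN].
have dvd_N : p ^ r.-1 %| m * p ^ r.-1 by apply: dvdn_mull.
have dvd_Cs := dvdn_mul_bin s dvd_N.
have dvd_Ct : p ^ r.-1 %| 'C(m * p ^ r.-1, s) * (m * p ^ r.-1 - s).
  by rewrite -bin_sub //; exact: dvdn_mul_bin.
rewrite (_ : r + 2 = r.-1 + 3); last by lia.
have [def_p|p_neq3] := eqVneq p 3; last first.
  have p_ge5 := odd_prime_ge5 p_pr p_odd p_neq3.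
  rewrite andbF /=; apply: eq_modn_dvdz; rewrite !PoszM -[X in (_ - X)%R]mulr1.
  apply: (@dvdz_mul_pair _ _ _ _ _ _ 1 1); rewrite ?mulr1 ?subrr ?mulr0 ?dvdz0 //;
    exact: dvdz_bin_central.
subst p; have hs := dvdz_bin_central3 dvd_Cs; have ht := dvdz_bin_central3 dvd_Ct.
case: ifP => [/andP[/eqP def_r _]|r_neq1].
  subst r; move: hs ht le_sN; rewrite [1.-1]/= expn0 !muln1 => hs ht le_sm.
  apply: eq_modn_dvdz; rewrite !PoszM.
  apply: (dvdz_mul_pair hs ht); apply: dvdz_mull.
  rewrite add0n -{2}(subnKC le_sm); exact: dvdz_cube_factors27.
apply: eq_modn_dvdz; rewrite !PoszM -[X in (_ - X)%R]mulr1.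
apply: (dvdz_mul_pair hs ht).
apply: dvdz_cube_factors_pow3 dvd_Cs; last by rewrite subnKC.
by move: r_gt0 r_neq1; case: (r) => [|[|]].
Qed.
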